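(* Let $T$ be a measure-preserving automorphism of a standard probability Borel space $(X,\mathcal{B},\mu)$, let $\{W_n\}_{n\in\mathbb{N}}$ be measurable subsets of $X$ and let $\{q_n\}_{n\in\mathbb{N}}$ be an increasing sequence of natural numbers. Then $\{q_n\}$ is a rigidity sequence for $T$ along $\{W_n\}$ if and only if for every $f\in L^1(X,\mathcal{B},\mu)$ we have $\chi_{W_n}(f\circ T^{q_n}-f)\to 0$ in measure.
   Context: $\{q_n\}$ is a rigidity sequence for $T$ along $\{W_n\}$ if $\mu((T^{-q_n}A\,\triangle\, A)\cap W_n)\to 0$ for every $A\in\mathcal{B}$. $\chi_W$ denotes the indicator function of $W$. *)

From HB Require Import structures.
From mathcomp Require Import all_boot all_order all_algebra.
From mathcomp Require Import all_classical all_reals all_analysis.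
Set Implicit Arguments. Unset Strict Implicit. Unset Printing Implicit Defensive.
Import Order.TTheory GRing.Theory Num.Theory.
Local Open Scope classical_set_scope.
Local Open Scope ring_scope.

(* Standard Borel space (via Kuratowski's theorem): the measurable space X is
   Borel-isomorphic to a Borel subset B of the real line, i.e. there is a
   bijection phi : X -> B that is measurable and maps measurable sets to
   Borel sets. *)
Definition standard_borel d (X : measurableType d) (R : realType) : Prop :=
  exists (B : set (measurableTypeR R)) (phi : X -> measurableTypeR R),
    [/\ measurable B, set_bij setT B phi, measurable_fun setT phi
      & forall A : set X, measurable A -> measurable (phi @` A)].

Definition mp_automorphism d (X : measurableType d) (R : realType)
    (mu : {measure set X -> \bar R}) (T : X -> X) : Prop :=
  [/\ bijective T, measurable_fun setT T,
      (forall A : set X, measurable A -> measurable (T @` A))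
    & forall A : set X, measurable A -> mu (T @^-1` A) = mu A].

Definition rigidity_along d (X : measurableType d) (R : realType)
    (mu : {measure set X -> \bar R}) (T : X -> X) (q : nat -> nat)
    (W : nat -> set X) : Prop :=
  forall A : set X, measurable A ->
    (fun n => mu ((((iter (q n) T) @^-1` A) `+` A) `&` W n)) @ \oo --> 0%E.

Definition cvg_in_measure_to0 d (X : measurableType d) (R : realType)
    (mu : {measure set X -> \bar R}) (g : nat -> X -> R) : Prop :=
  forall eps : R, 0 < eps ->
    (fun n => mu [set x | eps <= `|g n x|]) @ \oo --> 0%E.

Definition chi (X : Type) (R : realType) (W : set X) (x : X) : R :=
  if `[< W x >] then 1 else 0.

From HB Require Import structures.
From mathcomp Require Import all_boot all_order all_algebra.
From mathcomp Require Import all_classical all_reals all_analysis.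
From mathcomp Require Import lra measurable_realfun.
(* The converse implication is the case f = 1_A: the function
   |chi_{W_n} (1_A o T^{q_n} - 1_A)| is >= 1 exactly on (T^{-q_n} A + A) & W_n.
   For the direct implication only the measurability of f matters. Given eps,
   pick K with mu (|f| >= K eps) small and cut ]-K eps, K eps[ by the grid
   c_j = (j - K) eps, j < 2K. If x is in W_n and f x, f (T^{q_n} x) are both
   inside the window but eps apart, some c_j separates them, so x lies in
   (T^{-q_n} L_j + L_j) & W_n with L_j = [set f < c_j]; rigidity makes these
   finitely many sets small. The remaining points lie in [set |f| >= K eps] or
   in its preimage under T^{q_n}, which has the same measure. *)

Import Order.TTheory GRing.Theory Num.Theory.
Local Open Scope classical_set_scope.
Local Open Scope ring_scope.

Lemma nonneg_cvge0P {R : realType} {u : nat -> \bar R} :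
    (forall n, 0 <= u n)%E ->
  u @ \oo --> 0%E <-> forall e : R, 0 < e -> \forall n \near \oo, (u n <= e%:E)%E.
Proof.
move=> u0; have finu e n : (u n <= e%:E)%E -> u n \is a fin_num.
  by move=> une; rewrite ge0_fin_numE ?u0 // (le_lt_trans une) ?ltry.
split=> [/fine_cvgP[fu /cvgrPdist_le cu] e e0 | ue].
  apply: filterS2 fu (cu e e0) => n fn /=.
  by rewrite sub0r normrN ger0_norm ?fine_ge0 ?u0 // -lee_fin fineK.
apply/fine_cvgP; split; first by apply: filterS (ue 1 ltr01) => n; apply: finu.
apply/cvgrPdist_le => e e0; apply: filterS (ue e e0) => n une /=.
by rewrite sub0r normrN ger0_norm ?fine_ge0 ?u0 // -lee_fin fineK // (finu e).
Qed.

Lemma measure_bigsetU_cvg0 {d} {T : measurableType d} {R : realType}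
    {mu : {measure set T -> \bar R}} (N : nat) {S : nat -> nat -> set T} :
    (forall j n, measurable (S j n)) ->
    (forall j, (fun n => mu (S j n)) @ \oo --> 0%E) ->
  (fun n => mu (\big[setU/set0]_(j < N) S j n)) @ \oo --> 0%E.
Proof.
move=> mS cS; apply: (@squeeze_cvge _ _ _ _ (cst 0%E) _
  (fun n => \sum_(j < N) mu (S j n))%E); last 2 first.
- exact: cvg_cst.
- rewrite -[X in _ --> X](@big1 _ 0%E +%E _ (index_enum 'I_N) xpredT (fun=> 0%E)) //.
  by apply: (@cvg_nnesum _ _ _ _ _ _ _ (fun=> 0%E) xpredT) => j _;
    [exact: nearW | exact: cS].
near=> n; rewrite measure_ge0 /=.
apply: (content_subadditive mu (F := S ^~ n)) => //.
exact: bigsetU_measurable.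
Unshelve. all: end_near. Qed.

Section real_valued_level_sets.
Context d (X : measurableType d) (R : realType) (h : X -> R).
Hypothesis mh : measurable_fun setT h.

Lemma measurable_ge_set (c : R) : measurable [set x | c <= h x].
Proof. by rewrite -[X in measurable X]setTI -preimage_itvcy; exact: mh. Qed.

Lemma measurable_lt_set (c : R) : measurable [set x | h x < c].
Proof. by rewrite -[X in measurable X]setTI -preimage_itvNyo; exact: mh. Qed.

End real_valued_level_sets.

Lemma measure_norm_ge_cvg0 {d} {X : measurableType d} {R : realType}
    (mu : {finite_measure set X -> \bar R}) {f : X -> R} {eps : R} :
    measurable_fun setT f -> 0 < eps ->
  (fun K : nat => mu [set x | K%:R * eps <= `|f x|]) @ \oo --> 0%E.
Proof.
move=> mf eps0; pose F (K : nat) := [set x | K%:R * eps <= `|f x|].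
have mF K : measurable (F K) by apply: measurable_ge_set; exact: measurableT_comp.
have F_nonincr : nonincreasing_seq F.
  move=> m n mn; apply/subsetPset => x; apply: le_trans.
  by rewrite ler_pM2r // ler_nat.
have F_cap0 : \bigcap_K F K = set0.
  apply/seteqP; split=> // x /= Fx.
  have /andP[_] := truncn_itv (divr_ge0 (normr_ge0 (f x)) (ltW eps0)).
  by rewrite ltr_pdivrMr // ltNge; apply/negP/negPn; exact: Fx.
rewrite -[X in _ --> X](measure0 mu) -F_cap0.
apply: nonincreasing_cvg_mu => //; last by rewrite F_cap0.
by rewrite -ge0_fin_numE //; exact: (fin_num_measure mu _ (mF 0%N)).
Qed.

Lemma level_crossing {R : archiRealFieldType} {eps : R} {K : nat} {a b : R} :
    0 < eps -> `|a| < K%:R * eps -> `|b| < K%:R * eps -> eps <= `|b - a| ->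
  exists j : 'I_(2 * K),
    (a < j%:R * eps - K%:R * eps) != (b < j%:R * eps - K%:R * eps).
Proof.
move=> eps0; wlog ab : a b / a <= b => [hwlog ha hb hab|].
  have [/hwlog/(_ ha hb hab)//|/ltW ba] := leP a b.
  have [|j hj] := hwlog b a ba hb ha; first by rewrite distrC.
  by exists j; rewrite eq_sym.
move=> /ltr_normlP[ha1 ha2] /ltr_normlP[hb1 hb2]; rewrite ger0_norm ?subr_ge0 // => hab.
set M := K%:R * eps in ha1 ha2 hb1 hb2 *.
have aM : 0 <= (a + M) / eps by rewrite divr_ge0 ?ltW //; lra.
have /andP[] := truncn_itv aM; set t := Num.truncn _.
rewrite ler_pdivlMr // ltr_pdivrMr // -addn1 natrD mulrDl mul1r => tle ltt.
have jK : (t + 1 < 2 * K)%N.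
  by rewrite -(ltr_nat R) -(ltr_pM2r eps0) natrD natrM -mulrA -/M; lra.
exists (Ordinal jK); rewrite /= natrD mulrDl mul1r.
have -> : a < t%:R * eps + eps - M by lra.
by rewrite ltNge (_ : _ <= b) //; lra.
Qed.

Lemma chi_diff_ge_subset (X : Type) (R : realType) (W : set X) (S : X -> X)
    (f : X -> R) (eps : R) (K : nat) : 0 < eps ->
  let L j := [set x | f x < j%:R * eps - K%:R * eps] in
  let B := [set x | K%:R * eps <= `|f x|] in
  [set x | eps <= `|chi R W x * (f (S x) - f x)|] `<=`
    \big[setU/set0]_(j < 2 * K) ((S @^-1` L j `+` L j) `&` W) `|` B `|` S @^-1` B.
Proof.
move=> eps0 L B x /=; rewrite /chi; case: asboolP => [Wx|_]; last first.
  by rewrite mul0r normr0 leNgt eps0.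
rewrite mul1r => fxS.
have [Bx|] := leP (K%:R * eps) `|f x|; first by left; right.
have [BSx|] := leP (K%:R * eps) `|f (S x)|; first by right.
move=> fSxM fxM.
left; left; rewrite -(bigcup_mkord _ (fun j => (S @^-1` L j `+` L j) `&` W)).
have [j Lj] := level_crossing eps0 fxM fSxM fxS.
exists j; first exact: ltn_ord.
split=> //; move: Lj; rewrite /setY /setD /L /=; set c := _ - _.
by case: (boolP (f x < c)); case: (boolP (f (S x) < c)) => //= h1 h2 _;
  [right|left]; split=> //; exact/negP.
Qed.

Section iterates.
Context {d} {X : measurableType d} {R : realType} {mu : {measure set X -> \bar R}}.
Context {T : X -> X}.
Hypothesis mT : measurable_fun setT T.

Lemma measurable_fun_iter n : measurable_fun setT (iter n T).
Proof. by elim: n => [|n IH] /=; [exact: measurable_id | exact: measurableT_comp]. Qed.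

Lemma measurable_preimage_iter n A : measurable A -> measurable (iter n T @^-1` A).
Proof. by move=> mA; rewrite -[X in measurable X]setTI; exact: measurable_fun_iter. Qed.

Hypothesis muT : forall A, measurable A -> mu (T @^-1` A) = mu A.

Lemma measure_preimage_iter n A : measurable A -> mu (iter n T @^-1` A) = mu A.
Proof.
elim: n A => [|n IH] A mA //=.
rewrite -[X in mu X]/(iter n T @^-1` (T @^-1` A)) IH ?muT //.
by rewrite -[X in measurable X]setTI; exact: mT.
Qed.

End iterates.

Lemma chiE (X : Type) (R : realType) (W : set X) : chi R W = \1_W.
Proof.
apply/funext => x; rewrite /chi /indic.
by case: asboolP => [Wx|nWx]; rewrite ?(mem_set Wx) ?(memNset nWx).
Qed.

Lemma chi_indic_diff_ge1 (X : Type) (R : realType) (W A : set X) (S : X -> X) :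
  [set x | 1 <= `|chi R W x * (\1_A (S x) - \1_A x)|] = (S @^-1` A `+` A) `&` W.
Proof.
apply/seteqP; split=> x /=; rewrite chiE /indic /setY /setD;
  have [Wx|Wx] := pselect (W x); rewrite ?(mem_set Wx) ?(memNset Wx);
  have [Ax|Ax] := pselect (A x); rewrite ?(mem_set Ax) ?(memNset Ax);
  have [ASx|ASx] := pselect (A (S x)); rewrite ?(mem_set ASx) ?(memNset ASx);
  rewrite ?mul0r ?mul1r ?subrr ?subr0 ?sub0r ?normrN ?normr0 ?normr1 ?ler10 //;
  tauto.
Qed.

Lemma rigidity_cvg_in_measure d (X : measurableType d) (R : realType)
    (mu : {finite_measure set X -> \bar R}) (T : X -> X) (q : nat -> nat)
    (W : nat -> set X) (f : X -> R) :
    measurable_fun setT T -> (forall A, measurable A -> mu (T @^-1` A) = mu A) ->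
    (forall n, measurable (W n)) -> rigidity_along mu T q W ->
    measurable_fun setT f ->
  cvg_in_measure_to0 mu (fun n x => chi R (W n) x * (f (iter (q n) T x) - f x)).
Proof.
move=> mT muT mW rig mf eps eps0; apply/nonneg_cvge0P => // e e0.
have [K muB] : exists K : nat,
    (mu [set x | (K%:R * eps <= `|f x|)%R] <= (e / 4)%:E)%E.
  have e4 : 0 < e / 4 by rewrite divr_gt0.
  have [K _ hK] := (nonneg_cvge0P (fun=> measure_ge0 mu _)).1
    (measure_norm_ge_cvg0 mu mf eps0) _ e4.
  by exists K; apply: hK => /=.
set B := [set x | _] in muB.
pose L (j : nat) := [set x | f x < j%:R * eps - K%:R * eps].
pose Y j n := (iter (q n) T @^-1` L j `+` L j) `&` W n.
have mB : measurable B by apply: measurable_ge_set; exact: measurableT_comp.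
have mL j : measurable (L j) by exact: measurable_lt_set.
have mY j n : measurable (Y j n).
  apply: measurableI => //; apply: measurableU; apply: measurableD => //;
  exact: measurable_preimage_iter.
have e2 : 0 < e / 2 by rewrite divr_gt0.
have [N _ hN] := (nonneg_cvge0P (fun=> measure_ge0 mu _)).1
  (measure_bigsetU_cvg0 (2 * K) mY (fun j => rig _ (mL j))) _ e2.
exists N => // n /hN /= muU.
have mU : measurable (\big[setU/set0]_(j < 2 * K) Y j n).
  exact: bigsetU_measurable.
have mTB : measurable (iter (q n) T @^-1` B) by exact: measurable_preimage_iter.
have mG : measurable [set x | eps <= `|chi R (W n) x * (f (iter (q n) T x) - f x)|].
  apply: measurable_ge_set; apply: measurableT_comp => //; rewrite chiE.
  apply: measurable_funM => //; apply: measurable_funB => //.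
  exact: measurableT_comp mf (measurable_fun_iter mT _).
have cover : [set x | eps <= `|chi R (W n) x * (f (iter (q n) T x) - f x)|]
    `<=` \big[setU/set0]_(j < 2 * K) Y j n `|` B `|` iter (q n) T @^-1` B.
  exact: chi_diff_ge_subset.
have mUB := measurableU _ _ mU mB.
rewrite (le_trans (le_measure _ _ _ cover)) ?inE //; first exact: measurableU.
have muTB : (mu (iter (q n) T @^-1` B) <= (e / 4)%:E)%E.
  by rewrite (measure_preimage_iter mT muT).
apply: (le_trans (measureU2 _ mUB mTB)).
apply: (le_trans (leeD (measureU2 _ mU mB) (lexx _))).
have -> : e = e / 2 + e / 4 + e / 4 by lra.
by rewrite !EFinD !leeD.
Qed.

Theorem lemma3p2 (d : measure_display) (X : measurableType d) (R : realType)
    (mu : probability X R) (T : X -> X) (W : nat -> set X) (q : nat -> nat) :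
  standard_borel X R ->
  mp_automorphism mu T ->
  (forall n, measurable (W n)) ->
  {homo q : m n / (m < n)%N} ->
  rigidity_along mu T q W <->
  (forall f : X -> R, mu.-integrable setT (EFin \o f) ->
     cvg_in_measure_to0 mu
       (fun n x => chi R (W n) x * (f (iter (q n) T x) - f x))).
Proof.
move=> _ [_ mT _ muT] mW _; split=> [rig f /integrableP[/measurable_EFinP mf _]|].
  exact: rigidity_cvg_in_measure.
move=> cvgT A mA; have := cvgT _ (integrable_indic mu mA) 1 ltr01.
by under eq_fun do rewrite chi_indic_diff_ge1.
Qed.
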